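(* Let $X$ be an observation whose distribution $P_\theta$ depends on a parameter $\theta\in\Theta$. Let $N=\{1,\dots,n\}$ index a family of null hypotheses $H_1,\dots,H_n$, each $H_i\subseteq\Theta$, with elementary test functions $\phi_1,\dots,\phi_n$ (each a $\{0,1\}$-valued function of $X$, $\phi_i=1$ meaning $H_i$ is rejected) and rejection regions $R_i=\{\phi_i=1\}$ in the sample space. Let $0<\alpha<1$. Suppose $\emptyset\neq I\subset N$, $\emptyset\neq J\subset N$, $I\cap J=\emptyset$, and $\bigcup_{i\in I}R_i\subseteq\bigcup_{j\in J}R_j$. For each $j\in J$ let $\phi^j=\{\phi_i^j: i\in N\setminus\{j\}\}$ be a multiple test (a collection of elementary test functions indexed by $N\setminus\{j\}$), and let $\phi^I=\{\phi_i^I: i\in N\setminus I\}$ be a multiple test indexed by $N\setminus I$. Define elementary test functions $\psi_i$, $i\in N$, by $$\psi_i=\begin{cases}\min\Big(\min_{j\in J,\ j\neq i}\phi_i^j,\ \phi_i^I\Big), & i\in N\setminus I,\\[4pt] \min\Big(\min_{j\in J}\phi_i^j,\ \max_{j\in J}\psi_j\Big), & i\in I,\end{cases}$$ (which is well defined since $J\subseteq N\setminus I$). If $\phi^j\in\Phi_\alpha(N\setminus\{j\})$ for every $j\in J$ and $\phi^I\in\Phi_\alpha(N\setminus I)$, then $\{\psi_i:i\in N\}\in\Phi_\alpha(N)$.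
   Context: For elementary test functions, $\min_{i\in S}\phi_i$ equals $1$ if $\phi_i=1$ for all $i\in S$ and $0$ otherwise (with the convention that a minimum over the empty set equals $1$), and $\max_{i\in S}\phi_i$ equals $1$ if $\phi_i=1$ for some $i\in S$ and $0$ otherwise. For $\emptyset\neq S\subseteq N$, $\Phi_\alpha(S)$ denotes the set of all multiple tests $\{\phi_i:i\in S\}$ for the hypotheses $\{H_i:i\in S\}$ that strongly control the familywise error rate at level $\alpha$, i.e. for every $\theta\in\Theta$, $P_\theta(\phi_i=1\text{ for some } i\in S \text{ with }\theta\in H_i)\le\alpha$; equivalently, for every nonempty $S'\subseteq S$ and every $\theta\in\bigcap_{i\in S'}H_i$, $P_\theta(\max_{i\in S'}\phi_i=1)\le\alpha$. *)

From HB Require Import structures.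
From mathcomp Require Import all_boot all_order all_algebra.
From mathcomp Require Import all_classical all_reals.
From mathcomp Require Import ereal measure probability.
Set Implicit Arguments. Unset Strict Implicit. Unset Printing Implicit Defensive.
Import Order.TTheory GRing.Theory Num.Theory.
Local Open Scope classical_set_scope.
Local Open Scope ring_scope.

(* Index set N = 'I_n; a multiple test indexed by S : {set 'I_n} is a family
   phi : 'I_n -> T -> bool (only the values at i \in S matter);
   phi i x = true means H_i is rejected on observation x. *)

(* Phi_alpha(S): strong FWER control at level alpha for the hypotheses H_i,
   i \in S.  Test functions are required to be measurable (rejection regions
   are events). *)
Definition Phi_alpha {R : realType} {d : measure_display} {T : measurableType d}
  {Theta : Type} {n : nat} (P : Theta -> probability T R)
  (H : 'I_n -> set Theta) (alpha : R) (S : {set 'I_n})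
  (phi : 'I_n -> T -> bool) : Prop :=
  (forall i, i \in S -> measurable [set x | phi i x]) /\
  (forall theta : Theta,
     (P theta [set x | exists i, [/\ i \in S, H i theta & phi i x]]
       <= alpha%:E)%E).

Definition psi_out {T : Type} {n : nat} (J : {set 'I_n})
  (phiJ : 'I_n -> 'I_n -> T -> bool) (phiI : 'I_n -> T -> bool)
  (i : 'I_n) (x : T) : bool :=
  [forall j in J, (j != i) ==> phiJ j i x] && phiI i x.

(* psi_i for i in N; for i in I uses max_{j in J} psi_j, where psi_j = psi_out j
   since J is contained in N \ I. *)
Definition psi {T : Type} {n : nat} (I J : {set 'I_n})
  (phiJ : 'I_n -> 'I_n -> T -> bool) (phiI : 'I_n -> T -> bool)
  (i : 'I_n) (x : T) : bool :=
  if i \in I then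
    [forall j in J, phiJ j i x] && [exists j in J, psi_out J phiJ phiI j x]
  else psi_out J phiJ phiI i x.

(* If some [H_j], [j \in J], is false at theta, then every [psi_i] with
   [i != j] rejects only when [phi^j_i] does, and rejecting [H_j] itself is no
   error: the false rejections of psi are false rejections of [phi^j].
   If all [H_j], [j \in J], are true, then [psi_i] with [i \notin I] rejects
   only when [phi^I_i] does, while [psi_i] with [i \in I] rejects only when some
   [psi_j], [j \in J], does, which is a false rejection of [phi^I] because
   [J] lies in the complement of [I].  In both cases the familywise error of
   psi at theta is bounded by that of a test of level alpha. *)

From Pilot Require Import Defs.
From HB Require Import structures.
From mathcomp Require Import all_boot all_order all_algebra.
From mathcomp Require Import all_classical all_reals.
From mathcomp Require Import ereal measure probability.
Set Implicit Arguments. Unset Strict Implicit. Unset Printing Implicit Defensive.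
Import Order.TTheory GRing.Theory Num.Theory.
Local Open Scope classical_set_scope.
Local Open Scope ring_scope.

Section measurable_boolean_tests.
Context {d : measure_display} {T : measurableType d}.

Lemma measurable_andb (f g : T -> bool) :
  measurable [set x | f x] -> measurable [set x | g x] ->
  measurable [set x | f x && g x].
Proof.
move=> mf mg; rewrite (_ : [set x | _] = [set x | f x] `&` [set x | g x]).
  exact: measurableI.
by apply/seteqP; split=> x /=; [move/andP | case=> -> ->].
Qed.

Lemma measurable_implyb (b : bool) (f : T -> bool) :
  (b -> measurable [set x | f x]) -> measurable [set x | b ==> f x].
Proof.
case: b => [mf|_]; first exact: mf.
by rewrite (_ : [set x | _] = setT) //; apply/seteqP; split.
Qed.

Lemma measurable_exists_in (I : finType) (A : {pred I}) (f : I -> T -> bool) :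
  (forall i, i \in A -> measurable [set x | f i x]) ->
  measurable [set x | [exists i in A, f i x]].
Proof.
move=> mf.
rewrite (_ : [set x | _] = \bigcup_(i in [set i | i \in A]) [set x | f i x]).
  exact: fin_bigcup_measurable finite_finset mf.
apply/seteqP; split=> x /=; first by case/existsP=> i /andP[iA fi]; exists i.
by case=> i iA fi; apply/existsP; exists i; rewrite iA.
Qed.

Lemma measurable_forall_in (I : finType) (A : {pred I}) (f : I -> T -> bool) :
  (forall i, i \in A -> measurable [set x | f i x]) ->
  measurable [set x | [forall i in A, f i x]].
Proof.
move=> mf.
rewrite (_ : [set x | _] = \bigcap_(i in [set i | i \in A]) [set x | f i x]).
  exact: fin_bigcap_measurable finite_finset mf.
apply/seteqP; split=> x /=; first by move/forall_inP.
by move=> fA; apply/forall_inP.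
Qed.

End measurable_boolean_tests.

Section false_rejections_of_psi.
Context {T Theta : Type} {n : nat} (H : 'I_n -> set Theta).

Definition false_rejection (theta : Theta) (S : {set 'I_n})
    (phi : 'I_n -> T -> bool) : set T :=
  [set x | exists i, [/\ i \in S, H i theta & phi i x]].

Context (I J : {set 'I_n}).
Context (phiJ : 'I_n -> 'I_n -> T -> bool) (phiI : 'I_n -> T -> bool).
Local Notation psi := (psi I J phiJ phiI).
Local Notation psi_out := (psi_out J phiJ phiI).

Lemma psi_out_phiI i x : psi_out i x -> phiI i x.
Proof. by case/andP. Qed.

Lemma psi_phiJ i j x : j \in J -> i != j -> psi i x -> phiJ j i x.
Proof.
move=> jJ neq_ij; rewrite /Defs.psi /Defs.psi_out.
by case: (i \in I) => /andP[/forall_inP/(_ j jJ) + _]; rewrite // eq_sym neq_ij.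
Qed.

Lemma psi_phiI i x : i \notin I -> psi i x -> phiI i x.
Proof. by rewrite /Defs.psi => /negbTE->; exact: psi_out_phiI. Qed.

Lemma psi_in_I i x : i \in I -> psi i x -> exists2 j, j \in J & psi_out j x.
Proof. by rewrite /Defs.psi => ->; case/andP=> _ /exists_inP. Qed.

Lemma false_rejection_psi_phiJ theta j : j \in J -> ~ H j theta ->
  false_rejection theta [set: 'I_n] psi `<=`
  false_rejection theta [set~ j]%SET (phiJ j).
Proof.
move=> jJ nHj x [i [_ Hi psix]].
have neq_ij : i != j by apply: contraPneq nHj => <-.
by exists i; split; rewrite ?inE //; exact: psi_phiJ jJ neq_ij psix.
Qed.

Lemma false_rejection_psi_phiI theta :
  {in J, forall j, j \notin I} -> {in J, forall j, H j theta} ->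
  false_rejection theta [set: 'I_n] psi `<=` false_rejection theta (~: I) phiI.
Proof.
move=> JnI HJ x [i [_ Hi psix]]; have [iI|niI] := boolP (i \in I).
  have [j jJ psi_jx] := psi_in_I iI psix.
  exists j; split; [by rewrite inE JnI | exact: HJ | exact: psi_out_phiI psi_jx].
by exists i; split; rewrite ?inE //; exact: psi_phiI niI psix.
Qed.

End false_rejections_of_psi.

Section familywise_error.
Context {R : realType} {d : measure_display} {T : measurableType d}.
Context {Theta : Type} {n : nat} (P : Theta -> probability T R).
Context (H : 'I_n -> set Theta) (alpha : R).

Lemma measurable_false_rejection theta (S : {set 'I_n})
    (phi : 'I_n -> T -> bool) :
  (forall i, i \in S -> measurable [set x | phi i x]) ->
  measurable (false_rejection H theta S phi).
Proof.
move=> mphi; pose S_true := [set i in S | `[< H i theta >]].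
rewrite (_ : false_rejection _ _ _ _ = [set x | [exists i in S_true, phi i x]]).
  by apply: measurable_exists_in => i; rewrite inE => /andP[/mphi].
apply/seteqP; split=> x /=.
  by case=> i [iS Hi phix]; apply/exists_inP; exists i; rewrite // inE iS asboolT.
by case/exists_inP=> i; rewrite inE => /andP[iS /asboolP Hi] phix; exists i.
Qed.

Lemma Phi_alpha_dominated (S : {set 'I_n}) (psi : 'I_n -> T -> bool) :
  (forall i, i \in S -> measurable [set x | psi i x]) ->
  (forall theta, exists S' phi, Phi_alpha P H alpha S' phi /\
     false_rejection H theta S psi `<=` false_rejection H theta S' phi) ->
  Phi_alpha P H alpha S psi.
Proof.
move=> mpsi dom; split => // theta.
have [S' [phi [[mphi ctrl] sub]]] := dom theta.
apply: le_trans (ctrl theta); apply: le_measure sub; rewrite inE.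
- exact: measurable_false_rejection.
- exact: measurable_false_rejection.
Qed.

End familywise_error.

Section measurable_psi.
Context {d : measure_display} {T : measurableType d} {n : nat}.
Context (I J : {set 'I_n}).
Context (phiJ : 'I_n -> 'I_n -> T -> bool) (phiI : 'I_n -> T -> bool).
Hypothesis measurable_phiJ :
  forall j i, j \in J -> i != j -> measurable [set x | phiJ j i x].

Lemma measurable_psi_out i : measurable [set x | phiI i x] ->
  measurable [set x | psi_out J phiJ phiI i x].
Proof.
move=> mphiI; apply: measurable_andb mphiI.
apply: measurable_forall_in => j jJ; apply: measurable_implyb => neq_ji.
by apply: measurable_phiJ; rewrite // eq_sym.
Qed.

Lemma measurable_psi i : {in J, forall j, j \notin I} ->
  (forall i, i \notin I -> measurable [set x | phiI i x]) ->
  measurable [set x | psi I J phiJ phiI i x].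
Proof.
move=> JnI mphiI; rewrite /psi; have [iI|niI] := boolP (i \in I); last first.
  exact: measurable_psi_out (mphiI _ niI).
apply: measurable_andb.
  apply: measurable_forall_in => j jJ; apply: measurable_phiJ => //.
  by apply: contraNneq (JnI j jJ) => <-.
apply: measurable_exists_in => j jJ.
exact: measurable_psi_out (mphiI _ (JnI j jJ)).
Qed.

End measurable_psi.

Theorem theorem1 (R : realType) (d : measure_display) (T : measurableType d)
  (Theta : Type) (n : nat) (P : Theta -> probability T R)
  (H : 'I_n -> set Theta) (phi : 'I_n -> T -> bool) (alpha : R)
  (I J : {set 'I_n})
  (phiJ : 'I_n -> 'I_n -> T -> bool) (phiI : 'I_n -> T -> bool) :
  0 < alpha < 1 ->
  I != finset.set0 -> J != finset.set0 -> finset.setI I J = finset.set0 ->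
  [set x | exists i, i \in I /\ phi i x] `<=` [set x | exists j, j \in J /\ phi j x] ->
  (forall j, j \in J -> Phi_alpha P H alpha (finset.setC (finset.set1 j)) (phiJ j)) ->
  Phi_alpha P H alpha (finset.setC I) phiI ->
  Phi_alpha P H alpha (finset.setTfor 'I_n) (psi I J phiJ phiI).
Proof.
move=> _ _ _ disjIJ _ ctrlJ ctrlI.
have JnI : {in J, forall j, j \notin I}.
  by move=> j jJ; apply/negP => jI; move/setP/(_ j): disjIJ; rewrite !inE jI jJ.
have mphiJ j i : j \in J -> i != j -> measurable [set x | phiJ j i x].
  by move=> jJ neq_ij; case: (ctrlJ j jJ) => mphi _; apply: mphi; rewrite !inE.
have mphiI i : i \notin I -> measurable [set x | phiI i x].
  by case: ctrlI => mphi _ niI; apply: mphi; rewrite inE.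
apply: Phi_alpha_dominated => [i _|theta]; first exact: measurable_psi.
have [[j [jJ nHj]]|HJ] := pselect (exists j, j \in J /\ ~ H j theta).
  exists [set~ j]%SET, (phiJ j); split; first exact: ctrlJ.
  exact: false_rejection_psi_phiJ.
exists (~: I), phiI; split=> //; apply: false_rejection_psi_phiI => // j jJ.
by apply: contrapT => nHj; apply: HJ; exists j.
Qed.
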